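(* In the setting described in the context, for $m\in\mathcal{M}$ and $s\in\mathcal{S}$ define $V$ by the Bellman equation $$V(m,s)=\min_{g^r\in\{1,\dots,k\},\,g^d\in\{1,\dots,k\}}\Big(\ell(m,s,g^r,g^d)+\beta\sum_{\hat m\in\mathcal{M}}\mathbb{P}(\hat m\mid m,g^r,g^d)\,V(\hat m,f(s))\Big),$$ and let $(\mathfrak{g}^{r,*}(m,s),\mathfrak{g}^{d,*}(m,s))$ be a minimizer of the right-hand side. Then the control law $$u^{i,*}_t=\mathbb{1}(x^i_t=0)\,\mathfrak{g}^{r,*}(m_t,s_t)+\mathbb{1}(x^i_t=1)\,\mathfrak{g}^{d,*}(m_t,s_t),\quad i\in\{1,\dots,n\},\ t\in\mathbb{N},$$ is optimal, i.e. the corresponding strategy $g^*$ satisfies $J(g^* )\le J(g)$ for every admissible strategy $g$.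
   Context: Setting: $n\in\mathbb{N}$ users, demand probability $p\in(0,1)$, $k$ options $\{1,\dots,k\}$. Each option $u$ has participation rate $\alpha(u)\in[0,1]$, delivery rate $q(u,m)\in(0,1]$, reserve price $c_r(u,1-m)\ge0$ and demand price $c_d(u,m)\ge0$, for $m\in\mathcal{M}:=\{0,\frac1n,\dots,1\}$. User $i$ has state $x^i_t\in\{0,1\}$ (1 = has a demand); mean-field $m_t=\frac1n\sum_i\mathbb{1}(x^i_t=1)$. Given option $u^i_t$ and $m_t$: $\mathbb{P}(x^i_{t+1}=1\mid x^i_t=0,u^i_t,m_t)=(1-\alpha(u^i_t))p$, $\mathbb{P}(x^i_{t+1}=0\mid x^i_t=1,u^i_t,m_t)=q(u^i_t,m_t)$ (complementary probabilities otherwise), users' transitions conditionally independent given current joint states and actions. Per-user cost $c(x,u,m)=\mathbb{1}(x=0)c_r(u,1-m)+\mathbb{1}(x=1)c_d(u,m)$. Desired load trajectory: set $\mathcal{S}$, maps $f:\mathcal{S}\to\mathcal{S}$, $h:\mathcal{S}\to[0,1]$, known initial $s_1$, $s_{t+1}=f(s_t)$, $\theta_t=h(s_t)$. $D:\mathcal{M}\times[0,1]\to\mathbb{R}_{\ge0}$ is a distance function, $\beta\in(0,1)$ a discount factor. Admissible strategies $g=(g_1,g_2,\dots)$ have $u^i_t=g_t(x^i_t,m_{1:t})$ with $g_t:\{0,1\}\times\mathcal{M}^t\to\{1,\dots,k\}$, common to all users. The cost is $J(g)=\mathbb{E}^g\big[\sum_{t=1}^\infty\beta^{t-1}\frac1n\big(\sum_{i=1}^n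 c(x^i_t,u^i_t,m_t)+D(m_t,\theta_t)\big)\big]$. Define $\ell(m,s,g^r,g^d):=(1-m)c_r(g^r,1-m)+m\,c_d(g^d,m)+D(m,h(s))$. The transition kernel $\mathbb{P}(\hat m\mid m,g^r,g^d)$ is the probability that $m_{t+1}=\hat m$ given $m_t=m$ when users with state $0$ use option $g^r$ and users with state $1$ use option $g^d$; explicitly it is the distribution of $\frac1n(Y_0+Y_1)$ with $Y_0\sim\mathrm{Binomial}(n(1-m),(1-\alpha(g^r))p)$ and $Y_1\sim\mathrm{Binomial}(nm,1-q(g^d,m))$ independent. *)

From HB Require Import structures.
From mathcomp Require Import all_boot all_order all_algebra.
From mathcomp Require Import all_classical all_reals all_analysis.
Set Implicit Arguments. Unset Strict Implicit. Unset Printing Implicit Defensive.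
Import Order.TTheory GRing.Theory Num.Theory.
Import numFieldNormedType.Exports.
Local Open Scope ring_scope.

Section Model.
Variables (R : realType) (n k : nat) (S : Type).
Variables (p beta : R) (alpha : 'I_k -> R) (q cr cd : 'I_k -> R -> R).
Variables (D : R -> R -> R) (f : S -> S) (h : S -> R) (s1 : S).

(* joint state of the n users: x i = true  iff user i has a demand *)
Definition jstate := {ffun 'I_n -> bool}.

(* number of users with a demand; the mean-field is  m = mcnt x / n *)
Definition mcnt (x : jstate) : 'I_n.+1 := inord #|[set i | x i]|.

Definition mreal (j : 'I_n.+1) : R := (j%:R) / (n%:R).

Definition sstate (t : nat) : S := iter t.-1 f s1.

Definition ucost (xi : bool) (u : 'I_k) (m : R) : R :=
  if xi then cd u m else cr u (1 - m).

Definition ptrans (xi : bool) (u : 'I_k) (m : R) (xi' : bool) : R :=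
  if xi then (if xi' then 1 - q u m else q u m)
  else (if xi' then (1 - alpha u) * p else 1 - (1 - alpha u) * p).

(* admissible strategies: u^i_t = g t x^i_t m_{1:t}, where the mean-field
   history m_{1:t} is encoded by the sequence of demand counts (in
   chronological order, size t). *)
Definition strategy := nat -> bool -> seq 'I_n.+1 -> 'I_k.

Definition xdef : jstate := [ffun _ => false].

(* Expected discounted cost of the next T stages, given the (reversed)
   history [x_t; ...; x_1] of joint states (t = size hist). *)
Fixpoint Jrec (g : strategy) (T : nat) (hist : seq jstate) : R :=
  match T with
  | 0 => 0
  | T'.+1 =>
    let t := size hist in
    let x := head xdef hist in
    let mh := rev (map mcnt hist) in
    let m := mreal (mcnt x) in
    let u := fun i : 'I_n => g t (x i) mh in
    beta ^+ t.-1 *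
      ((n%:R)^-1 * (\sum_(i < n) ucost (x i) (u i) m) + D m (h (sstate t)))
    + \sum_(x' : jstate)
        (\prod_(i < n) ptrans (x i) (u i) m (x' i)) * Jrec g T' (x' :: hist)
  end.

Definition JT (P0 : jstate -> R) (g : strategy) (T : nat) : R :=
  \sum_(x1 : jstate) P0 x1 * Jrec g T [:: x1].

Definition Jcost (P0 : jstate -> R) (g : strategy) : R := limn (JT P0 g).

Definition lcost (j : 'I_n.+1) (s : S) (gr gd : 'I_k) : R :=
  let m := mreal j in
  (1 - m) * cr gr (1 - m) + m * cd gd m + D m (h s).

Definition binpmf (N a : nat) (r : R) : R := 'C(N, a)%:R * r ^+ a * (1 - r) ^+ (N - a).

(* P(mhat | m, g^r, g^d): law of (Y0 + Y1)/n, Y0 ~ Bin(n(1-m),(1-alpha g^r)p),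
   Y1 ~ Bin(nm, 1 - q(g^d,m)), independent; m = j/n, mhat = j'/n. *)
Definition kernel (j j' : 'I_n.+1) (gr gd : 'I_k) : R :=
  \sum_(a < (n - j).+1) \sum_(b < j.+1)
    (if (a + b == j')%N then
       binpmf (n - j) a ((1 - alpha gr) * p) * binpmf j b (1 - q gd (mreal j))
     else 0).

Definition bellmanQ (V : 'I_n.+1 -> S -> R) (j : 'I_n.+1) (s : S) (gr gd : 'I_k) : R :=
  lcost j s gr gd + beta * \sum_(j' < n.+1) kernel j j' gr gd * V j' (f s).

Definition gstar (gR gD : 'I_n.+1 -> S -> 'I_k) : strategy :=
  fun t xi mh =>
    let j := last ord0 mh in
    if xi then gD j (sstate t) else gR j (sstate t).

End Model.

(* A verification argument for the Bellman equation.  Let Jgap be the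
   T-stage cost incurred from a history, minus the discounted value
   beta^(t-1) V(m_t, s_t) of its last state.  One step of the recursion gives
   Jgap_(T+1) = beta^(t-1) (Q(u) - V) + E[Jgap_T], and Q(u) >= V with
   equality at the minimisers, so |V| <= B yields Jgap_T >= -beta^(t-1+T) B
   for every strategy and Jgap_T <= beta^(t-1+T) B for gstar.  Averaging over
   the initial law, J_T(gstar) <= J_T(g) + 2 B beta^T; the J_T are nondecreasing
   and bounded, so letting T -> oo gives J(gstar) <= J(g).
   Under a symmetric strategy the joint transition only matters through the
   next number of demanding users, whose law is the convolution of two
   binomials: the product of the users' Bernoulli generating functions
   (1 - a_i) + a_i X factors into two binomial powers. *)

From Pilot Require Import Defs.
From HB Require Import structures.
From mathcomp Require Import all_boot all_order all_algebra.
From mathcomp Require Import all_classical all_reals all_analysis.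
From mathcomp Require Import ring lra.
Import Order.TTheory GRing.Theory Num.Theory.
Import numFieldNormedType.Exports.
Set Implicit Arguments.
Unset Strict Implicit.
Local Open Scope ring_scope.

Lemma card_ffun_false n (x : {ffun 'I_n -> bool}) :
  #|(fun i => ~~ x i)| = (n - #|[set i | x i]|)%N.
Proof.
have card_x : #|(fun i => x i)| = #|[set i | x i]|.
  by apply: eq_card => i; rewrite inE.
have := cardC (fun i => x i); rewrite card_ord card_x.
by move/(congr1 (subn^~ #|[set i | x i]|)); rewrite addKn.
Qed.

Lemma prod_if_ffun (R : comPzSemiRingType) n (x : {ffun 'I_n -> bool}) (a b : R) :
  \prod_(i < n) (if x i then a else b) =
  b ^+ (n - #|[set i | x i]|) * a ^+ #|[set i | x i]|.
Proof.
rewrite (bigID (fun i => x i)) /= mulrC; congr (_ * _).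
  by rewrite (eq_bigr (fun=> b)) => [|i /negbTE ->//]; rewrite prodr_const card_ffun_false.
rewrite (eq_bigr (fun=> a)) => [|i ->//]; rewrite prodr_const.
by congr (_ ^+ _); apply: eq_card => i; rewrite inE.
Qed.

Lemma sum_if_ffun (V : nmodType) n (x : {ffun 'I_n -> bool}) (a b : V) :
  \sum_(i < n) (if x i then a else b) =
  b *+ (n - #|[set i | x i]|) + a *+ #|[set i | x i]|.
Proof.
rewrite (bigID (fun i => x i)) /= addrC; congr (_ + _).
  by rewrite (eq_bigr (fun=> b)) => [|i /negbTE ->//]; rewrite sumr_const card_ffun_false.
rewrite (eq_bigr (fun=> a)) => [|i ->//]; rewrite sumr_const.
by congr (_ *+ _); apply: eq_card => i; rewrite inE.
Qed.

Lemma le_wmean (R : numDomainType) (I : finType) (w F : I -> R) c :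
  (forall i, 0 <= w i) -> \sum_i w i = 1 -> (forall i, F i <= c) ->
  \sum_i w i * F i <= c.
Proof.
move=> w_ge0 w_sum1 F_le; rewrite -[c]mul1r -w_sum1 mulr_suml.
by apply: ler_sum => i _; apply: ler_wpM2l.
Qed.

Lemma ge_wmean (R : numDomainType) (I : finType) (w F : I -> R) c :
  (forall i, 0 <= w i) -> \sum_i w i = 1 -> (forall i, c <= F i) ->
  c <= \sum_i w i * F i.
Proof.
move=> w_ge0 w_sum1 F_ge; rewrite -[c]mul1r -w_sum1 mulr_suml.
by apply: ler_sum => i _; apply: ler_wpM2l.
Qed.

Lemma finite_ubound (R : realDomainType) (I : finType) (F : I -> R) :
  exists M, forall i, F i <= M.
Proof. by exists (\big[Num.max/0]_i F i) => i; exact: le_bigmax. Qed.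

Lemma limn_le_vanishing (R : realType) (u v e : R ^nat) :
  cvgn u -> cvgn v -> (e @ \oo --> 0)%classic -> (forall T, u T <= v T + e T) ->
  limn u <= limn v.
Proof.
move=> u_cvg v_cvg e_cvg0 u_le.
have ve_cvg : ((fun T => v T + e T) @ \oo --> limn v + 0)%classic.
  exact: cvgD.
rewrite -[limn v]addr0 -(cvg_lim _ ve_cvg) //.
by apply: ler_lim => //; [exact: cvgP ve_cvg | exact: nearW].
Qed.

Section BernoulliGeneratingFunction.
Variable R : comNzRingType.

Definition bernoulli_gf (r : R) : {poly R} := (1 - r)%:P + r%:P * 'X.

Lemma prod_bernoulli_gf n (a : 'I_n -> R) :
  \prod_(i < n) bernoulli_gf (a i) =
  \sum_(x : {ffun 'I_n -> bool})
     (\prod_(i < n) (if x i then a i else 1 - a i))%:P * 'X^#|[set i | x i]|.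
Proof.
transitivity (\prod_(i < n) \sum_(b : bool) (if b then (a i)%:P * 'X else (1 - a i)%:P)).
  by apply: eq_bigr => i _; rewrite big_bool /= addrC.
rewrite bigA_distr_bigA /=; apply: eq_bigr => x _.
transitivity (\prod_(i < n) ((if x i then a i else 1 - a i)%:P * 'X^(x i : nat))).
  by apply: eq_bigr => i _; case: (x i); rewrite ?expr1 ?expr0 ?mulr1.
rewrite big_split /= -rmorph_prod prodrXr; congr (_ * 'X^_).
rewrite -sum1_card [RHS]big_mkcond /=.
by apply: eq_bigr => i _; rewrite inE; case: (x i).
Qed.

Lemma bernoulli_gfX (r : R) N :
  bernoulli_gf r ^+ N =
  \sum_(a < N.+1) ('C(N, a)%:R * r ^+ a * (1 - r) ^+ (N - a))%:P * 'X^a.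
Proof.
rewrite exprDn; apply: eq_bigr => a _.
rewrite exprMn -!rmorphXn -mulr_natl -mulr_natl !rmorphM /= rmorph_nat.
ring.
Qed.

Lemma coef_mul_sums M N (c d : nat -> R) i :
  ((\sum_(a < M) (c a)%:P * 'X^a) * (\sum_(b < N) (d b)%:P * 'X^b))`_i =
  \sum_(a < M) \sum_(b < N) (if (a + b == i)%N then c a * d b else 0).
Proof.
rewrite big_distrlr coef_sum; apply: eq_bigr => a _.
rewrite coef_sum; apply: eq_bigr => b _.
rewrite /= mulrACA -rmorphM -exprD coefCM coefXn eq_sym.
by case: eqP; rewrite ?mulr1 ?mulr0.
Qed.

End BernoulliGeneratingFunction.

Lemma mcntE n (x : jstate n) : (mcnt x : nat) = #|[set i | x i]|.
Proof. by rewrite inordK // ltnS (leq_trans (max_card _)) ?card_ord. Qed.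

Lemma mreal_itv (R : realType) n (j : 'I_n.+1) : 0 <= mreal R j <= 1.
Proof.
rewrite /mreal divr_ge0 ?ler0n //=.
case: n j => [|n] j; first by rewrite invr0 mulr0.
by rewrite ler_pdivrMr ?ltr0n // mul1r ler_nat -ltnS.
Qed.

Section JointTransition.
Variables (R : realType) (n k : nat) (p : R) (alpha : 'I_k -> R) (q : 'I_k -> R -> R).

Definition jtrans (x : jstate n) (gr gd : 'I_k) (x' : jstate n) : R :=
  \prod_(i < n) ptrans p alpha q (x i) (if x i then gd else gr) (mreal R (mcnt x)) (x' i).

Lemma ptransE xi u m xi' :
  ptrans p alpha q xi u m xi' =
  if xi' then ptrans p alpha q xi u m true else 1 - ptrans p alpha q xi u m true.
Proof. by case: xi; case: xi' => //=; rewrite opprB addrC subrK. Qed.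

Lemma sum_jtrans x gr gd : \sum_(x' : jstate n) jtrans x gr gd x' = 1.
Proof.
rewrite -(bigA_distr_bigA (fun i b => ptrans p alpha q (x i) _ _ b)) /=.
by apply: big1 => i _; rewrite big_bool (ptransE _ _ _ false) /= addrC subrK.
Qed.

Lemma sum_jtrans_mcnt_eq x gr gd (j' : 'I_n.+1) :
  \sum_(x' : jstate n) jtrans x gr gd x' * (mcnt x' == j')%:R =
  Defs.kernel p alpha q (mcnt x) j' gr gd.
Proof.
pose a i := ptrans p alpha q (x i) (if x i then gd else gr) (mreal R (mcnt x)) true.
transitivity ((\prod_(i < n) bernoulli_gf (a i))`_j').
  rewrite prod_bernoulli_gf coef_sum; apply: eq_bigr => x' _.
  rewrite coefCM coefXn -mcntE eq_sym; congr (_ * _).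
  by apply: eq_bigr => i _; rewrite ptransE.
rewrite (eq_bigr (fun i => if x i then bernoulli_gf (1 - q gd (mreal R (mcnt x)))
                           else bernoulli_gf ((1 - alpha gr) * p))) => [|i _]; last first.
  by rewrite /a; case: (x i).
rewrite /Defs.kernel mcntE prod_if_ffun !bernoulli_gfX.
exact: (coef_mul_sums _ _ (fun a => binpmf (n - #|[set i | x i]|) a ((1 - alpha gr) * p))
                          (fun b => binpmf #|[set i | x i]| b (1 - q gd (mreal R (mcnt x))))).
Qed.

Lemma sum_jtrans_mcnt x gr gd (F : 'I_n.+1 -> R) :
  \sum_(x' : jstate n) jtrans x gr gd x' * F (mcnt x') =
  \sum_(j' < n.+1) Defs.kernel p alpha q (mcnt x) j' gr gd * F j'.
Proof.
rewrite (eq_bigr (fun j' => \sum_(x' : jstate n) jtrans x gr gd x' * (mcnt x' == j')%:R * F j'))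
  => [|j' _]; last by rewrite -mulr_suml sum_jtrans_mcnt_eq.
rewrite exchange_big /=; apply: eq_bigr => x' _.
rewrite (bigD1 (mcnt x')) //= eqxx mulr1 big1 ?addr0 // => j' /negbTE.
by rewrite eq_sym => ->; rewrite mulr0 mul0r.
Qed.

End JointTransition.

Lemma mean_ucost (R : realType) n k (cr cd : 'I_k -> R -> R) (x : jstate n) gr gd :
  (0 < n)%N ->
  let m := mreal R (mcnt x) in
  n%:R^-1 * \sum_(i < n) ucost cr cd (x i) (if x i then gd else gr) m =
  (1 - m) * cr gr (1 - m) + m * cd gd m.
Proof.
move=> n_gt0 m.
rewrite (eq_bigr (fun i => if x i then cd gd m else cr gr (1 - m))) => [|i _]; last first.
  by rewrite /ucost; case: (x i).
have mcnt_le : (#|[set i | x i]| <= n)%N by rewrite -mcntE -ltnS.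
have n_neq0 : (n%:R : R) != 0 by rewrite pnatr_eq0 -lt0n.
rewrite sum_if_ffun -(mulr_natr (cd gd m)) -(mulr_natr (cr gr (1 - m))).
rewrite /m /mreal mcntE natrB //.
by field.
Qed.

(* At time t = size hist, (decision g hist false, decision g hist true) is the
   pair (g^r, g^d) of options used by idle and by demanding users. *)
Definition decision n k (g : strategy n k) (hist : seq (jstate n)) (xi : bool) : 'I_k :=
  g (size hist) xi (rev (map (@mcnt n) hist)).

Section Optimality.
Variables (R : realType) (n k : nat) (S : Type).
Variables (p beta : R) (alpha : 'I_k -> R) (q cr cd : 'I_k -> R -> R).
Variables (D : R -> R -> R) (f : S -> S) (h : S -> R) (s1 : S).
Variables (V : 'I_n.+1 -> S -> R) (gR gD : 'I_n.+1 -> S -> 'I_k) (B : R).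
Variable P0 : jstate n -> R.

Local Notation J := (@Jrec R n k S p beta alpha q cr cd D f h s1).
Local Notation ell := (@lcost R n k S cr cd D h).
Local Notation Q := (@bellmanQ R n k S p beta alpha q cr cd D f h V).
Local Notation jtrans := (@jtrans R n k p alpha q).
Local Notation sstate := (sstate f s1).
Local Notation gs := (gstar f s1 gR gD).
Local Notation JT := (JT p beta alpha q cr cd D f h s1 P0).

Hypothesis n_gt0 : (0 < n)%N.
Hypothesis p_itv : 0 <= p <= 1.
Hypothesis beta_ge0 : 0 <= beta.
Hypothesis beta_lt1 : beta < 1.
Hypothesis alpha_itv : forall u, 0 <= alpha u <= 1.
Hypothesis q_itv : forall u (j : 'I_n.+1), 0 <= q u (mreal R j) <= 1.
Hypothesis cr_ge0 : forall u (j : 'I_n.+1), 0 <= cr u (1 - mreal R j).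
Hypothesis cd_ge0 : forall u (j : 'I_n.+1), 0 <= cd u (mreal R j).
Hypothesis D_ge0 : forall (j : 'I_n.+1) th, 0 <= th <= 1 -> 0 <= D (mreal R j) th.
Hypothesis h_itv : forall s, 0 <= h s <= 1.
Hypothesis P0_ge0 : forall x, 0 <= P0 x.
Hypothesis P0_sum1 : \sum_(x : jstate n) P0 x = 1.
Hypothesis V_le : forall j s, `|V j s| <= B.
Hypothesis V_bellman : forall j s, V j s = Q j s (gR j s) (gD j s).
Hypothesis gstar_min : forall j s gr gd, Q j s (gR j s) (gD j s) <= Q j s gr gd.

Lemma jtrans_ge0 x gr gd x' : 0 <= jtrans x gr gd x'.
Proof.
have /andP[p_ge0 p_le1] := p_itv; apply: prodr_ge0 => i _.
have := alpha_itv (if x i then gd else gr); have := q_itv (if x i then gd else gr) (mcnt x).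
rewrite /ptrans; case: (x i) (x' i) => -[] /andP[q_ge0 q_le1] /andP[a_ge0 a_le1]; nra.
Qed.

Lemma lcost_ge0 j s gr gd : 0 <= ell j s gr gd.
Proof.
have /andP[m_ge0 m_le1] := mreal_itv R j.
by rewrite /lcost !addr_ge0 ?mulr_ge0 ?subr_ge0 ?cr_ge0 ?cd_ge0 ?D_ge0.
Qed.

Lemma JrecS g T x rest :
  let u := decision g (x :: rest) in
  J g T.+1 (x :: rest) =
  beta ^+ size rest * ell (mcnt x) (sstate (size rest).+1) (u false) (u true)
  + \sum_(x' : jstate n) jtrans x (u false) (u true) x' * J g T (x' :: x :: rest).
Proof.
move=> u; rewrite [LHS]/=; congr (_ * _ + _).
  rewrite /lcost -(mean_ucost cr cd x (u false) (u true) n_gt0).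
  by congr (_ * _ + _); apply: eq_bigr => i _; case: (x i).
by apply: eq_bigr => x' _; congr (_ * _); apply: eq_bigr => i _; case: (x i).
Qed.

Lemma decision_gstar x rest xi :
  decision gs (x :: rest) xi = (if xi then gD else gR) (mcnt x) (sstate (size rest).+1).
Proof. by rewrite /decision /gstar map_cons rev_cons last_rcons; case: xi. Qed.

Lemma bellmanQ_jtrans x s gr gd :
  Q (mcnt x) s gr gd =
  ell (mcnt x) s gr gd + beta * \sum_(x' : jstate n) jtrans x gr gd x' * V (mcnt x') (f s).
Proof. by rewrite (sum_jtrans_mcnt p alpha q x gr gd (fun j => V j (f s))). Qed.

Definition Jgap g T x rest :=
  J g T (x :: rest) - beta ^+ size rest * V (mcnt x) (sstate (size rest).+1).

Lemma JgapS g T x rest :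
  let u := decision g (x :: rest) in
  let s := sstate (size rest).+1 in
  Jgap g T.+1 x rest =
  beta ^+ size rest * (Q (mcnt x) s (u false) (u true) - V (mcnt x) s)
  + \sum_(x' : jstate n) jtrans x (u false) (u true) x' * Jgap g T x' (x :: rest).
Proof.
move=> u s; rewrite /Jgap JrecS bellmanQ_jtrans -/u -/s /=.
have -> : sstate (size rest).+2 = f s by [].
set w := jtrans x (u false) (u true); set J' := fun x' => J g T (x' :: x :: rest).
have -> : \sum_(x' : jstate n) w x' * (J' x' - beta ^+ (size rest).+1 * V (mcnt x') (f s))
    = \sum_(x' : jstate n) w x' * J' x'
      - beta ^+ (size rest).+1 * \sum_(x' : jstate n) w x' * V (mcnt x') (f s).
  by rewrite mulr_sumr -sumrB; apply: eq_bigr => x' _; ring.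
rewrite exprS; ring.
Qed.

Lemma V_itv j s : - B <= V j s <= B.
Proof. by rewrite -ler_norml. Qed.

Lemma Jgap_ge g T x rest : - (beta ^+ (size rest + T) * B) <= Jgap g T x rest.
Proof.
elim: T x rest => [|T IH] x rest.
  have /andP[_ V_leB] := V_itv (mcnt x) (sstate (size rest).+1).
  by rewrite /Jgap /= addn0 sub0r lerN2 ler_wpM2l ?exprn_ge0.
rewrite JgapS /=; set u := decision g _; set s := sstate _.
have Q_ge : 0 <= beta ^+ size rest * (Q (mcnt x) s (u false) (u true) - V (mcnt x) s).
  by rewrite mulr_ge0 ?exprn_ge0 // subr_ge0 {1}V_bellman gstar_min.
rewrite -[X in X <= _]add0r lerD //.
apply: ge_wmean => [x'||x']; [exact: jtrans_ge0 | exact: sum_jtrans |].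
by rewrite -addSnnS; exact: (IH x' (x :: rest)).
Qed.

Lemma Jgap_gstar_le T x rest : Jgap gs T x rest <= beta ^+ (size rest + T) * B.
Proof.
elim: T x rest => [|T IH] x rest.
  have /andP[V_geNB _] := V_itv (mcnt x) (sstate (size rest).+1).
  by rewrite /Jgap /= addn0 sub0r -mulrN ler_wpM2l ?exprn_ge0 // lerNl.
rewrite JgapS /= !decision_gstar /= -V_bellman subrr mulr0 add0r.
apply: le_wmean => [x'||x']; [exact: jtrans_ge0 | exact: sum_jtrans |].
by rewrite -addSnnS; exact: (IH x' (x :: rest)).
Qed.

Lemma lcost_bounded : exists K, forall x s gr gd, ell (mcnt x) s gr gd <= K.
Proof.
have [Mr Mr_ub] := finite_ubound (fun uj : 'I_k * 'I_n.+1 => cr uj.1 (1 - mreal R uj.2)).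
have [Md Md_ub] := finite_ubound (fun uj : 'I_k * 'I_n.+1 => cd uj.1 (mreal R uj.2)).
exists (Mr + Md + (B + beta * B)) => x s gr gd.
have /andP[m_ge0 m_le1] := mreal_itv R (mcnt x).
(* D has no a priori upper bound: it is bounded through the Bellman equation *)
have ell_opt_le : ell (mcnt x) s (gR (mcnt x) s) (gD (mcnt x) s) <= B + beta * B.
  have /andP[_ V_leB] := V_itv (mcnt x) s.
  have EV_ge : - B <= \sum_(x' : jstate n)
                        jtrans x (gR (mcnt x) s) (gD (mcnt x) s) x' * V (mcnt x') (f s).
    apply: ge_wmean => [x'||x']; [exact: jtrans_ge0 | exact: sum_jtrans |].
    by have /andP[] := V_itv (mcnt x') (f s).
  have := ler_wpM2l beta_ge0 EV_ge; move: V_leB; rewrite V_bellman bellmanQ_jtrans.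
  by rewrite mulrN; lra.
have D_le : D (mreal R (mcnt x)) (h s) <= B + beta * B.
  apply: le_trans ell_opt_le; rewrite /lcost lerDr.
  by rewrite addr_ge0 ?mulr_ge0 ?subr_ge0.
rewrite /lcost lerD // lerD //.
  by apply: le_trans (Mr_ub (gr, mcnt x)); rewrite ler_piMl // lerBlDr lerDl.
by apply: le_trans (Md_ub (gd, mcnt x)); rewrite ler_piMl.
Qed.

Lemma Jrec_nondecreasing g T x rest : J g T (x :: rest) <= J g T.+1 (x :: rest).
Proof.
elim: T x rest => [|T IH] x rest; rewrite JrecS.
  rewrite big1 ?addr0 => [|x' _]; last by rewrite mulr0.
  by rewrite mulr_ge0 ?exprn_ge0 ?lcost_ge0.
rewrite JrecS lerD2l; apply: ler_sum => x' _.
by rewrite ler_wpM2l ?jtrans_ge0.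
Qed.

Lemma Jrec_le g K : (forall x s gr gd, ell (mcnt x) s gr gd <= K) ->
  forall T x rest, J g T (x :: rest) <= beta ^+ size rest * (K / (1 - beta)).
Proof.
move=> ell_le T; have beta1_gt0 : 0 < 1 - beta by rewrite subr_gt0.
elim: T => [|T IH] x rest.
  have K_ge0 : 0 <= K.
    apply: le_trans (ell_le x s1 (decision g [::] false) (decision g [::] true)).
    exact: lcost_ge0.
  by rewrite /= mulr_ge0 ?exprn_ge0 ?divr_ge0 ?(ltW beta1_gt0).
have -> : beta ^+ size rest * (K / (1 - beta)) =
          beta ^+ size rest * K + beta ^+ (size rest).+1 * (K / (1 - beta)).
  by rewrite exprS; field; rewrite lt0r_neq0.
rewrite JrecS lerD ?ler_wpM2l ?exprn_ge0 //.
by apply: le_wmean => [x'||x']; [exact: jtrans_ge0 | exact: sum_jtrans | exact: IH].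
Qed.

Lemma cvg_JT g : cvgn (JT g).
Proof.
have [K ell_le] := lcost_bounded.
apply: cvgP; apply: nondecreasing_cvgn.
  apply/nondecreasing_seqP => T; apply: ler_sum => x1 _.
  by rewrite ler_wpM2l ?Jrec_nondecreasing.
exists (K / (1 - beta)) => _ [T _ <-].
apply: le_wmean => // x1.
by have := Jrec_le g ell_le T x1 [::]; rewrite expr0 mul1r.
Qed.

Lemma JT_gstar_le g T : JT gs T <= JT g T + beta ^+ T * (B + B).
Proof.
pose EV := \sum_(x1 : jstate n) P0 x1 * V (mcnt x1) (sstate 1).
have JT_gap g' : JT g' T - EV = \sum_(x1 : jstate n) P0 x1 * Jgap g' T x1 [::].
  by rewrite /JT -sumrB; apply: eq_bigr => x1 _; rewrite /Jgap expr0 mul1r mulrBr.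
have JT_ge : - (beta ^+ T * B) <= JT g T - EV.
  by rewrite JT_gap; apply: ge_wmean => // x1; exact: (Jgap_ge g T x1 [::]).
have JT_gstar_le : JT gs T - EV <= beta ^+ T * B.
  by rewrite JT_gap; apply: le_wmean => // x1; exact: (Jgap_gstar_le T x1 [::]).
by rewrite mulrDr; lra.
Qed.

Lemma Jcost_gstar_le g : Jcost p beta alpha q cr cd D f h s1 P0 gs
                          <= Jcost p beta alpha q cr cd D f h s1 P0 g.
Proof.
apply: (limn_le_vanishing (e := fun T => beta ^+ T * (B + B))).
- exact: cvg_JT.
- exact: cvg_JT.
- by rewrite -(mul0r (B + B)); apply: cvgMl; apply: cvg_expr; rewrite ger0_norm.
- by move=> T /=; exact: JT_gstar_le.
Qed.

End Optimality.

Theorem theorem3 (R : realType) (n k : nat) (S : Type)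
  (p beta : R) (alpha : 'I_k -> R) (q cr cd : 'I_k -> R -> R)
  (D : R -> R -> R) (f : S -> S) (h : S -> R) (s1 : S)
  (P0 : jstate n -> R)
  (V : 'I_n.+1 -> S -> R) (gR gD : 'I_n.+1 -> S -> 'I_k) :
  (0 < n)%N ->
  0 < p < 1 ->
  0 < beta < 1 ->
  (forall u, 0 <= alpha u <= 1) ->
  (forall u (j : 'I_n.+1), 0 < q u (mreal R j) <= 1) ->
  (forall u (j : 'I_n.+1), 0 <= cr u (1 - mreal R j)) ->
  (forall u (j : 'I_n.+1), 0 <= cd u (mreal R j)) ->
  (forall (j : 'I_n.+1) th, 0 <= th <= 1 -> 0 <= D (mreal R j) th) ->
  (forall s, 0 <= h s <= 1) ->
  (forall x, 0 <= P0 x) -> \sum_(x : jstate n) P0 x = 1 ->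
  (* V is the (bounded) solution of the Bellman equation and (gR, gD) a minimizer *)
  (exists B : R, forall j s, `|V j s| <= B) ->
  (forall j s, V j s = bellmanQ p beta alpha q cr cd D f h V j s (gR j s) (gD j s)) ->
  (forall j s gr gd, bellmanQ p beta alpha q cr cd D f h V j s (gR j s) (gD j s)
                      <= bellmanQ p beta alpha q cr cd D f h V j s gr gd) ->
  forall g : strategy n k,
    Jcost p beta alpha q cr cd D f h s1 P0 (gstar f s1 gR gD)
    <= Jcost p beta alpha q cr cd D f h s1 P0 g.
Proof.
move=> n_gt0 /andP[p_gt0 p_lt1] /andP[beta_gt0 beta_lt1] alpha_itv q_itv cr_ge0 cd_ge0
  D_ge0 h_itv P0_ge0 P0_sum1 [B V_le] V_bellman gstar_min g.
have p_itv : 0 <= p <= 1 by rewrite !ltW.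
have q_itv' u (j : 'I_n.+1) : 0 <= q u (mreal R j) <= 1.
  by have /andP[/ltW -> ->] := q_itv u j.
exact: (Jcost_gstar_le _ n_gt0 p_itv (ltW beta_gt0) beta_lt1 alpha_itv q_itv' cr_ge0 cd_ge0
          D_ge0 h_itv P0_ge0 P0_sum1 V_le V_bellman gstar_min).
Qed.
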